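(* Let $\alpha>1$, $V(x)=|x|^\alpha/\alpha$, and let $\mu$ be the probability measure $d\mu(x)=Z^{-1}e^{-V(x)}dx$ on $\mathbb{R}$ ($Z$ a normalizing constant). Let $\nu$ be the symmetric exponential measure $d\nu(x)=\frac12e^{-|x|}dx$ and let $t:\mathbb{R}\to\mathbb{R}$ be the monotone rearrangement map pushing $\nu$ to $\mu$ (i.e. $G=H\circ t$ with $G,H$ the distribution functions of $\nu,\mu$). Then there is a constant $C_\alpha>0$ depending only on $\alpha$ such that $$|t'\circ t^{-1}(x)|\le\frac{C_\alpha}{V'(|x|)+1},\quad x\in\mathbb{R}.$$ *)

From Stdlib Require Import Reals.
From Coquelicot Require Import Coquelicot.
Open Scope R_scope.

(* |x|^a with the convention 0^a = 0 (a > 0); Stdlib's Rpower 0 a = 1. *)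
Definition abspow (a x : R) : R :=
  if Req_EM_T x 0 then 0 else Rpower (Rabs x) a.

Definition V (alpha : R) (x : R) : R := abspow alpha x / alpha.

Definition Zc (alpha : R) : R :=
  RInt_gen (fun x => exp (- V alpha x)) (Rbar_locally m_infty) (Rbar_locally p_infty).

Definition H (alpha : R) (x : R) : R :=
  RInt_gen (fun y => exp (- V alpha y) / Zc alpha) (Rbar_locally m_infty) (at_point x).

Definition G (x : R) : R :=
  RInt_gen (fun y => / 2 * exp (- Rabs y)) (Rbar_locally m_infty) (at_point x).

From Stdlib Require Import Reals Lra Classical.
From Coquelicot Require Import Coquelicot.
Open Scope R_scope.

(* Let [F] be the primitive of [e^{-V}] from [0] and [A] its limit at [+oo], so that [Z = 2 A]
   and [H = (A + F) / (2 A)].  For the Laplace law [G' = min (G, 1 - G)]; as [G = H o t],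
   the inverse function rule gives [t'(s) = (A - F |t s|) / e^{-V (|t s|)}].  The tail is
   controlled by [A - F y <= e^{-V y} / y^(alpha-1) = e^{-V y} / V'(y)], because
   [F + e^{-V} / u^(alpha-1)] is nonincreasing on [[u, +oo)]; this handles [y >= 1], while on
   [[0, 1]] we simply have [A - F y <= A] and [e^{-V y} >= 1/e]. *)

Lemma Rdiv_le_self (x r : R) : 0 <= x -> 1 <= r -> x / r <= x.
Proof.
  intros Hx Hr; apply Rmult_le_reg_r with r; [lra |].
  unfold Rdiv; rewrite Rmult_assoc, Rinv_l by lra; nra.
Qed.

Lemma Rdiv_le_cross (a b c d : R) : 0 < b -> 0 < d -> a * d <= c * b -> a / b <= c / d.
Proof.
  intros Hb Hd Hacbd; apply Rmult_le_reg_r with (b * d); [nra |].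
  replace (a / b * (b * d)) with (a * d) by (field; lra).
  replace (c / d * (b * d)) with (c * b) by (field; lra).
  exact Hacbd.
Qed.

Lemma Rpower_pos (x y : R) : 0 < Rpower x y.
Proof. apply exp_pos. Qed.

Lemma Rpower_1_base (y : R) : Rpower 1 y = 1.
Proof. unfold Rpower; rewrite ln_1, Rmult_0_r; apply exp_0. Qed.

Lemma even_Rabs (f : R -> R) (x : R) : (forall y, f (- y) = f y) -> f (Rabs x) = f x.
Proof.
  intros Hf; destruct (Rle_lt_dec 0 x).
  - rewrite Rabs_pos_eq; auto.
  - rewrite Rabs_left, Hf; auto.
Qed.

Lemma incr_lt_reflect (P : R -> R) (x y : R) :
  (forall x y, x < y -> P x < P y) -> P x < P y -> x < y.
Proof.
  intros HP Hxy; destruct (Rlt_le_dec x y) as [h | [h | h]]; auto.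
  - apply HP in h; lra.
  - subst; lra.
Qed.

Lemma incr_inj (Q : R -> R) :
  (forall x y, x < y -> Q x < Q y) -> forall x y, Q x = Q y -> x = y.
Proof.
  intros HQ x y E; destruct (Rtotal_order x y) as [h | [h | h]]; auto;
    apply HQ in h; lra.
Qed.

Lemma ball_R (x d y : R) : ball x d y <-> Rabs (y - x) < d.
Proof. reflexivity. Qed.

Lemma is_lim_incr_bounded (f : R -> R) (M : R) :
  (forall x y, x <= y -> f x <= f y) -> (forall x, f x <= M) ->
  exists l : R, is_lim f p_infty l.
Proof.
  intros Hf HM.
  destruct (completeness (fun y => exists x, y = f x)) as [l [Hub Hlub]].
  - exists M; intros y [x ->]; apply HM.
  - exists (f 0), 0; reflexivity.
  - exists l; apply is_lim_spec; intros [eps Heps].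
    destruct (classic (exists x0, l - eps < f x0)) as [[x0 Hx0] | Hnone].
    + exists x0; intros x Hx.
      assert (f x <= l) by (apply Hub; exists x; reflexivity).
      assert (f x0 <= f x) by (apply Hf; lra).
      simpl; apply Rabs_def1; lra.
    + assert (l <= l - eps); [|lra].
      apply Hlub; intros y [x ->].
      apply Rnot_lt_le; intros Hx; apply Hnone; exists x; exact Hx.
Qed.

Lemma is_lim_p_infty_le (f : R -> R) (l M x0 : R) :
  (forall x, x0 < x -> f x <= M) -> is_lim f p_infty l -> l <= M.
Proof.
  intros HM Hl.
  apply (is_lim_le_loc f (fun _ => M) p_infty l M); [| exact Hl | apply is_lim_const].
  exists x0; exact HM.
Qed.

Lemma incr_le_is_lim_p_infty (f : R -> R) (l x : R) :
  (forall x y, x <= y -> f x <= f y) -> is_lim f p_infty l -> f x <= l.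
Proof.
  intros Hf Hl.
  apply (is_lim_le_loc (fun _ => f x) f p_infty (f x) l); [| apply is_lim_const | exact Hl].
  exists x; intros y Hy; apply Hf; lra.
Qed.

Lemma is_RInt_gen_m_infty (f I : R -> R) (c l : R) :
  (forall x, is_RInt f x c (I x)) -> is_lim I m_infty l ->
  is_RInt_gen f (Rbar_locally m_infty) (at_point c) l.
Proof.
  intros HI Hl P HP.
  apply (Filter_prod _ _ _ (fun x => P (I x)) (fun y => y = c)).
  - exact (Hl P HP).
  - reflexivity.
  - intros x y Hx ->; exists (I x); split; [apply HI | exact Hx].
Qed.

Lemma is_RInt_gen_p_infty (f I : R -> R) (c l : R) :
  (forall y, is_RInt f c y (I y)) -> is_lim I p_infty l ->
  is_RInt_gen f (at_point c) (Rbar_locally p_infty) l.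
Proof.
  intros HI Hl P HP.
  apply (Filter_prod _ _ _ (fun x => x = c) (fun y => P (I y))).
  - reflexivity.
  - exact (Hl P HP).
  - intros x y -> Hy; exists (I y); split; [apply HI | exact Hy].
Qed.

Lemma derive_nonpos_le (f df : R -> R) (u b : R) :
  u <= b -> (forall x, u <= x <= b -> is_derive f x (df x)) ->
  (forall x, u <= x <= b -> df x <= 0) -> f b <= f u.
Proof.
  intros Hub Hd Hneg.
  destruct (MVT_gen f u b df) as [c [Hc Hfc]].
  - intros x Hx; rewrite Rmin_left, Rmax_right in Hx by lra; apply Hd; lra.
  - intros x Hx; rewrite Rmin_left, Rmax_right in Hx by lra.
    apply continuity_pt_filterlim, (ex_derive_continuous (K := R_AbsRing) (V := R_NormedModule)).
    exists (df x); apply Hd; exact Hx.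
  - rewrite Rmin_left, Rmax_right in Hc by lra.
    assert (df c * (b - u) <= 0) by (apply Rmult_le_0_r; [apply Hneg, Hc | lra]).
    lra.
Qed.

Lemma is_derive_difference_quotient (f : R -> R) (x l : R) :
  is_derive f x l <-> is_lim (fun h => (f (x + h) - f x) / h) 0 l.
Proof.
  rewrite is_derive_Reals, <- is_lim_spec; split.
  - intros Hd eps; destruct (Hd eps (cond_pos eps)) as [d Hdd].
    exists d; intros h Hh Hh0; apply Hdd; [exact Hh0 |].
    rewrite ball_R, Rminus_0_r in Hh; exact Hh.
  - intros Hl eps Heps; destruct (Hl (mkposreal eps Heps)) as [d Hd].
    exists d; intros h Hh0 Hh; apply (Hd h); [rewrite ball_R, Rminus_0_r; exact Hh | exact Hh0].
Qed.

Lemma continuity_pt_incr_comp (P Q t : R -> R) (s : R) :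
  (forall x, Q x = P (t x)) -> (forall x y, x < y -> P x < P y) ->
  continuity_pt Q s -> continuity_pt t s.
Proof.
  intros HQP HP HQ; apply continuity_pt_locally; intros [eps Heps]; simpl.
  assert (Hlo : P (t s - eps) < Q s) by (rewrite HQP; apply HP; lra).
  assert (Hhi : Q s < P (t s + eps)) by (rewrite HQP; apply HP; lra).
  set (m := Rmin (P (t s + eps) - Q s) (Q s - P (t s - eps))).
  assert (Hm : 0 < m) by (apply Rmin_glb_lt; lra).
  apply (filter_imp (fun y => Rabs (Q y - Q s) < m));
    [| exact (proj1 (continuity_pt_locally Q s) HQ (mkposreal m Hm))].
  intros y Hy; apply Rabs_def2 in Hy.
  assert (m <= P (t s + eps) - Q s) by apply Rmin_l.
  assert (m <= Q s - P (t s - eps)) by apply Rmin_r.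
  rewrite (HQP y) in Hy.
  assert (t s - eps < t y) by (apply (incr_lt_reflect P); [exact HP | lra]).
  assert (t y < t s + eps) by (apply (incr_lt_reflect P); [exact HP | lra]).
  apply Rabs_def1; lra.
Qed.

Lemma is_derive_inverse (P Q t : R -> R) (s dP dQ : R) :
  (forall x, Q x = P (t x)) -> (forall x y, Q x = Q y -> x = y) ->
  continuity_pt t s -> is_derive P (t s) dP -> dP <> 0 -> is_derive Q s dQ ->
  is_derive t s (dQ / dP).
Proof.
  intros HQP HQinj Ht HdP HdP0 HdQ.
  set (k := fun h => t (s + h) - t s).
  assert (HQk : forall h, h <> 0 -> P (t s + k h) - P (t s) <> 0).
  { intros h Hh E; apply Hh.
    assert (HQh : Q (s + h) = Q s) by (rewrite !HQP; unfold k in E;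
      replace (t s + (t (s + h) - t s)) with (t (s + h)) in E by ring; lra).
    apply HQinj in HQh; lra. }
  assert (Hk0 : forall h, h <> 0 -> k h <> 0).
  { intros h Hh E; apply (HQk h Hh); rewrite E, Rplus_0_r; ring. }
  assert (Hk : is_lim k 0 0).
  { apply is_lim_spec; intros eps.
    destruct (proj1 (continuity_pt_locally t s) Ht eps) as [d Hd].
    exists d; intros h Hh _; unfold k; rewrite Rminus_0_r; apply Hd.
    rewrite ball_R; rewrite ball_R in Hh.
    replace (s + h - s) with (h - 0) by ring; exact Hh. }
  assert (HdPk : is_lim (fun h => (P (t s + k h) - P (t s)) / k h) 0 dP).
  { apply (is_lim_comp (fun k => (P (t s + k) - P (t s)) / k) k 0 dP 0).
    - apply is_derive_difference_quotient, HdP.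
    - exact Hk.
    - exists posreal_one; intros h _ Hh E; apply (Hk0 h Hh); injection E; auto. }
  apply is_derive_difference_quotient in HdQ; apply is_derive_difference_quotient.
  apply (is_lim_ext_loc (fun h => (Q (s + h) - Q s) / h / ((P (t s + k h) - P (t s)) / k h))).
  - exists posreal_one; intros h _ Hh.
    pose proof (HQk h Hh) as HPh; pose proof (Hk0 h Hh) as Hkh.
    rewrite !HQP; unfold k in *.
    replace (t s + (t (s + h) - t s)) with (t (s + h)) in * by ring.
    field; auto.
  - apply (is_lim_div _ _ 0 dQ dP HdQ HdPk); [intros E; apply HdP0; injection E; auto | exact I].
Qed.

Definition prim (f : R -> R) (x : R) : R := RInt f 0 x.

(* For an even density [f] with [A = int_0^oo f], the distribution function of [f / (2 A)]
   (see [is_RInt_gen_m_infty_prim]). *)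
Definition cdf (f : R -> R) (A x : R) : R := (A + prim f x) / (2 * A).

Section EvenDensity.

Variable f : R -> R.
Hypothesis f_cont : forall x, continuous f x.
Hypothesis f_even : forall x, f (- x) = f x.
Hypothesis f_pos : forall x, 0 < f x.

Lemma is_RInt_prim (x : R) : is_RInt f 0 x (prim f x).
Proof.
  apply (RInt_correct (V := R_CompleteNormedModule)).
  apply (ex_RInt_continuous (V := R_CompleteNormedModule)); intros; apply f_cont.
Qed.

Lemma is_derive_prim (x : R) : is_derive (prim f) x (f x).
Proof.
  apply (is_derive_RInt f (prim f) 0 x); [| apply f_cont].
  exists posreal_one; intros; apply is_RInt_prim.
Qed.

Lemma prim_0 : prim f 0 = 0.
Proof. unfold prim; apply (RInt_point (V := R_CompleteNormedModule)). Qed.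

Lemma prim_odd (x : R) : prim f (- x) = - prim f x.
Proof.
  assert (Hneg : is_RInt (fun y => opp (f (- y))) 0 x (prim f (- x))).
  { apply (is_RInt_comp_opp (V := R_NormedModule)); rewrite Ropp_0; apply is_RInt_prim. }
  assert (Hopp : is_RInt (fun y => opp (f y)) 0 x (opp (prim f x))).
  { apply (is_RInt_opp (V := R_NormedModule)), is_RInt_prim. }
  change (- prim f x) with (opp (prim f x)).
  rewrite <- (is_RInt_unique (V := R_CompleteNormedModule) _ _ _ _ Hneg).
  rewrite <- (is_RInt_unique (V := R_CompleteNormedModule) _ _ _ _ Hopp).
  apply (RInt_ext (V := R_CompleteNormedModule)); intros y _; rewrite f_even; reflexivity.
Qed.

Lemma prim_incr (x y : R) : x < y -> prim f x < prim f y.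
Proof.
  intros Hxy; apply (incr_function (prim f) m_infty p_infty f); try easy.
  - intros; apply is_derive_prim.
  - intros; apply f_pos.
Qed.

Lemma prim_le (x y : R) : x <= y -> prim f x <= prim f y.
Proof. intros [Hxy | ->]; [left; apply prim_incr, Hxy | right; reflexivity]. Qed.

Lemma prim_nonneg (x : R) : 0 <= x -> 0 <= prim f x.
Proof. intros Hx; rewrite <- prim_0; apply prim_le, Hx. Qed.

Variable A : R.
Hypothesis prim_lim : is_lim (prim f) p_infty A.

Lemma prim_le_lim (x : R) : prim f x <= A.
Proof. exact (incr_le_is_lim_p_infty (prim f) A x prim_le prim_lim). Qed.

Lemma prim_lim_pos : 0 < A.
Proof. pose proof (prim_incr 0 1 Rlt_0_1); pose proof (prim_le_lim 1); rewrite prim_0 in *; lra. Qed.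

Lemma is_RInt_gen_m_infty_prim (x : R) :
  is_RInt_gen f (Rbar_locally m_infty) (at_point x) (A + prim f x).
Proof.
  apply (is_RInt_gen_Chasles (V := R_NormedModule) f 0 A (prim f x)).
  - apply (is_RInt_gen_m_infty f (fun y => prim f (- y))).
    + intros y; rewrite prim_odd; apply (is_RInt_swap (V := R_NormedModule)), is_RInt_prim.
    + apply (is_lim_comp (prim f) Ropp m_infty A p_infty); [exact prim_lim | |].
      * apply is_lim_spec; intros M; exists (- M); intros y Hy; simpl; lra.
      * exists 0; intros; discriminate.
  - apply is_RInt_gen_at_point, is_RInt_prim.
Qed.

Lemma is_RInt_gen_prim_total :
  is_RInt_gen f (Rbar_locally m_infty) (Rbar_locally p_infty) (2 * A).
Proof.
  replace (2 * A) with (plus (A + prim f 0) A) by (rewrite prim_0; unfold plus; simpl; ring).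
  apply (is_RInt_gen_Chasles (V := R_NormedModule) f 0).
  - apply is_RInt_gen_m_infty_prim.
  - exact (is_RInt_gen_p_infty f (prim f) 0 A is_RInt_prim prim_lim).
Qed.

Lemma is_derive_cdf (x : R) : is_derive (cdf f A) x (f x / (2 * A)).
Proof.
  pose proof prim_lim_pos.
  apply (is_derive_ext (fun y => / (2 * A) * (A + prim f y))).
  { intros y; apply Rmult_comm. }
  replace (f x / (2 * A)) with (/ (2 * A) * (0 + f x)) by (field; lra).
  apply is_derive_scal, (is_derive_plus (fun _ => A) (prim f)).
  - apply (is_derive_const (K := R_AbsRing) (V := R_NormedModule)).
  - apply is_derive_prim.
Qed.

Lemma cdf_incr (x y : R) : x < y -> cdf f A x < cdf f A y.
Proof.
  intros Hxy; pose proof prim_lim_pos; unfold cdf.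
  apply Rmult_lt_compat_r; [apply Rinv_0_lt_compat; lra |].
  pose proof (prim_incr x y Hxy); lra.
Qed.

Lemma Rmin_cdf (x : R) :
  Rmin (cdf f A x) (1 - cdf f A x) = (A - prim f (Rabs x)) / (2 * A).
Proof.
  pose proof prim_lim_pos.
  assert (Hc : 1 - cdf f A x = (A - prim f x) / (2 * A)) by (unfold cdf; field; lra).
  assert (Hk : 0 <= / (2 * A)) by (left; apply Rinv_0_lt_compat; lra).
  rewrite Hc; unfold cdf, Rdiv.
  destruct (Rle_lt_dec 0 x) as [Hx | Hx].
  - pose proof (prim_nonneg x Hx).
    rewrite Rabs_pos_eq, Rmin_right by (try apply Rmult_le_compat_r; lra).
    reflexivity.
  - pose proof (prim_nonneg (- x) ltac:(lra)); rewrite prim_odd in *.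
    rewrite Rabs_left, Rmin_left by (try apply Rmult_le_compat_r; lra).
    rewrite prim_odd; f_equal; ring.
Qed.

End EvenDensity.

Definition laplace (y : R) : R := / 2 * exp (- Rabs y).

Lemma laplace_cont (x : R) : continuous laplace x.
Proof.
  apply (continuous_scal_r (K := R_AbsRing) (V := R_NormedModule) (/ 2) (fun y => exp (- Rabs y))).
  apply (continuous_comp (fun y => - Rabs y) exp).
  - apply (continuous_opp (V := R_NormedModule) Rabs), continuous_Rabs.
  - apply (ex_derive_continuous (K := R_AbsRing) (V := R_NormedModule)).
    eexists; apply is_derive_exp.
Qed.

Lemma laplace_even (x : R) : laplace (- x) = laplace x.
Proof. unfold laplace; rewrite Rabs_Ropp; reflexivity. Qed.

Lemma laplace_pos (x : R) : 0 < laplace x.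
Proof. unfold laplace; pose proof (exp_pos (- Rabs x)); lra. Qed.

Lemma prim_laplace (x : R) : 0 <= x -> prim laplace x = (1 - exp (- x)) / 2.
Proof.
  intros Hx.
  assert (HF : is_RInt laplace 0 x (minus (- exp (- x) / 2) (- exp (- 0) / 2))).
  { apply (is_RInt_derive (V := R_CompleteNormedModule) (fun y => - exp (- y) / 2)).
    - intros y Hy; rewrite Rmin_left, Rmax_right in Hy by lra.
      unfold laplace; rewrite Rabs_pos_eq by lra.
      auto_derive; [exact I | field].
    - intros; apply laplace_cont. }
  unfold prim; rewrite (is_RInt_unique _ _ _ _ HF).
  unfold minus, plus, opp; simpl; rewrite Ropp_0, exp_0; field.
Qed.

Lemma is_lim_prim_laplace : is_lim (prim laplace) p_infty (1 / 2).
Proof.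
  apply (is_lim_ext_loc (fun x => (1 - exp (- x)) / 2)).
  { exists 0; intros x Hx; symmetry; apply prim_laplace; lra. }
  replace (1 / 2) with ((1 - 0) / 2) by field.
  apply (is_lim_comp (fun e => (1 - e) / 2) (fun x => exp (- x)) p_infty ((1 - 0) / 2) 0).
  - apply (is_lim_continuity (fun e => (1 - e) / 2) 0), continuity_pt_filterlim.
    apply (ex_derive_continuous (K := R_AbsRing) (V := R_NormedModule) (fun e => (1 - e) / 2) 0).
    auto_derive; exact I.
  - apply (is_lim_comp exp Ropp p_infty 0 m_infty is_lim_exp_m).
    + apply is_lim_spec; intros M; exists (- M); intros y Hy; simpl; lra.
    + exists 0; intros; discriminate.
  - exists 0; intros x _ E; injection E; apply Rgt_not_eq, exp_pos.
Qed.

Lemma G_cdf (x : R) : G x = cdf laplace (1 / 2) x.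
Proof.
  unfold G, cdf.
  apply (is_RInt_gen_unique (V := R_CompleteNormedModule)).
  replace ((1 / 2 + prim laplace x) / (2 * (1 / 2))) with (1 / 2 + prim laplace x) by field.
  apply (is_RInt_gen_m_infty_prim laplace laplace_cont laplace_even _ is_lim_prim_laplace).
Qed.

Lemma Rmin_G (s : R) : Rmin (G s) (1 - G s) = laplace s.
Proof.
  rewrite G_cdf, (Rmin_cdf laplace laplace_cont laplace_even laplace_pos _ is_lim_prim_laplace).
  rewrite prim_laplace by apply Rabs_pos.
  unfold laplace; field.
Qed.

Lemma is_derive_G (x : R) : is_derive G x (laplace x).
Proof.
  apply (is_derive_ext (cdf laplace (1 / 2))); [intros; symmetry; apply G_cdf |].
  replace (laplace x) with (laplace x / (2 * (1 / 2))) by field.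
  exact (is_derive_cdf laplace laplace_cont laplace_pos _ is_lim_prim_laplace x).
Qed.

Lemma G_incr (x y : R) : x < y -> G x < G y.
Proof.
  rewrite !G_cdf; exact (cdf_incr laplace laplace_cont laplace_pos _ is_lim_prim_laplace x y).
Qed.

Lemma abspow_nonneg (a x : R) : 0 <= abspow a x.
Proof. unfold abspow; destruct (Req_EM_T x 0); [lra | left; apply Rpower_pos]. Qed.

Lemma abspow_le_1 (a x : R) : 0 <= a -> Rabs x <= 1 -> abspow a x <= 1.
Proof.
  intros Ha Hx; unfold abspow; destruct (Req_EM_T x 0) as [_ | Hx0]; [lra |].
  rewrite <- (Rpower_1_base a); apply Rle_Rpower_l; [exact Ha |].
  split; [apply Rabs_pos_lt, Hx0 | exact Hx].
Qed.

Lemma V_pos_eq (a x : R) : 0 < x -> V a x = Rpower x a / a.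
Proof.
  intros Hx; unfold V, abspow; destruct (Req_EM_T x 0); [lra |].
  rewrite Rabs_pos_eq; lra.
Qed.

Lemma V_even (a x : R) : V a (- x) = V a x.
Proof.
  unfold V, abspow; rewrite Rabs_Ropp.
  destruct (Req_EM_T (- x) 0), (Req_EM_T x 0); reflexivity || lra.
Qed.

Lemma V_0 (a : R) : V a 0 = 0.
Proof. unfold V, abspow; destruct (Req_EM_T 0 0); lra. Qed.

Lemma V_nonneg (a x : R) : 0 < a -> 0 <= V a x.
Proof.
  intros Ha; unfold V; apply Rmult_le_pos; [apply abspow_nonneg |].
  left; apply Rinv_0_lt_compat, Ha.
Qed.

Lemma V_le_1 (a x : R) : 1 <= a -> Rabs x <= 1 -> V a x <= 1.
Proof.
  intros Ha Hx; unfold V; apply Rle_trans with (abspow a x).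
  - apply Rdiv_le_self; [apply abspow_nonneg | exact Ha].
  - apply abspow_le_1; [lra | exact Hx].
Qed.

Lemma is_derive_V_pos (a x : R) : 0 < a -> 0 < x -> is_derive (V a) x (Rpower x (a - 1)).
Proof.
  intros Ha Hx.
  apply (is_derive_ext_loc (fun y => / a * Rpower y a)).
  { exists (mkposreal x Hx); intros y Hy; rewrite ball_R in Hy; apply Rabs_def2 in Hy; simpl in Hy.
    rewrite V_pos_eq by lra; apply Rmult_comm. }
  replace (Rpower x (a - 1)) with (/ a * (a * Rpower x (a - 1))) by (field; lra).
  apply is_derive_scal, is_derive_Reals, derivable_pt_lim_power, Hx.
Qed.

Lemma is_derive_V_0 (a : R) : 1 < a -> is_derive (V a) 0 0.
Proof.
  intros Ha; apply is_derive_difference_quotient, is_lim_spec; intros [eps Heps].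
  exists (mkposreal _ (Rpower_pos eps (/ (a - 1)))); intros h Hh Hh0; simpl.
  rewrite ball_R, Rminus_0_r in Hh; simpl in Hh.
  rewrite Rplus_0_l, V_0, !Rminus_0_r.
  assert (Hh' : 0 < Rabs h) by (apply Rabs_pos_lt, Hh0).
  assert (Hpow : Rpower (Rabs h) (a - 1) < eps).
  { assert (Hd : Rpower (Rpower eps (/ (a - 1))) (a - 1) = eps).
    { rewrite Rpower_mult, Rinv_l by lra; apply Rpower_1, Heps. }
    rewrite <- Hd; apply Rlt_Rpower_l; lra. }
  assert (Hquot : Rabs (V a h / h) = Rpower (Rabs h) (a - 1) / a).
  { unfold V, abspow; destruct (Req_EM_T h 0) as [E | _]; [contradiction |].
    replace a with ((a - 1) + 1) at 1 by ring.
    rewrite Rpower_plus, Rpower_1 by exact Hh'.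
    unfold Rdiv; rewrite !Rabs_mult, !Rabs_inv, Rabs_Rabsolu.
    rewrite (Rabs_pos_eq a), (Rabs_pos_eq (Rpower _ _)) by (left; apply Rpower_pos || lra).
    field; split; lra. }
  rewrite Hquot; apply Rle_lt_trans with (Rpower (Rabs h) (a - 1)); [| exact Hpow].
  apply Rdiv_le_self; [left; apply Rpower_pos | lra].
Qed.

Lemma is_derive_V_nonneg (a y : R) : 1 < a -> 0 <= y -> is_derive (V a) y (abspow (a - 1) y).
Proof.
  intros Ha Hy; unfold abspow; destruct (Req_EM_T y 0) as [-> | Hy0].
  - apply is_derive_V_0, Ha.
  - rewrite Rabs_pos_eq by exact Hy; apply is_derive_V_pos; lra.
Qed.

Lemma ex_derive_V (a x : R) : 1 < a -> ex_derive (V a) x.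
Proof.
  intros Ha; destruct (Rle_lt_dec 0 x) as [Hx | Hx].
  - eexists; apply is_derive_V_nonneg; assumption.
  - apply (ex_derive_ext (fun y => V a (- y))); [intros; apply V_even |].
    apply (ex_derive_comp (V a) (fun y => - y)).
    + eexists; apply is_derive_V_nonneg; lra.
    + auto_derive; exact I.
Qed.

Definition gibbs (a x : R) : R := exp (- V a x).

Lemma gibbs_pos (a x : R) : 0 < gibbs a x.
Proof. apply exp_pos. Qed.

Lemma gibbs_even (a x : R) : gibbs a (- x) = gibbs a x.
Proof. unfold gibbs; rewrite V_even; reflexivity. Qed.

Lemma gibbs_cont (a x : R) : 1 < a -> continuous (gibbs a) x.
Proof.
  intros Ha; apply (ex_derive_continuous (K := R_AbsRing) (V := R_NormedModule)).
  apply (ex_derive_comp exp (fun y => - V a y)); [eexists; apply is_derive_exp |].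
  apply (ex_derive_opp (V a)), ex_derive_V, Ha.
Qed.

Lemma gibbs_le_1 (a x : R) : 0 < a -> gibbs a x <= 1.
Proof.
  intros Ha; unfold gibbs; rewrite <- exp_0.
  destruct (Rle_lt_or_eq_dec _ _ (V_nonneg a x Ha)) as [HV | <-]; [| rewrite Ropp_0; lra].
  left; apply exp_increasing; lra.
Qed.

Lemma gibbs_ge_exp_m1 (a x : R) : 1 <= a -> Rabs x <= 1 -> exp (-1) <= gibbs a x.
Proof.
  intros Ha Hx; unfold gibbs.
  destruct (Rle_lt_or_eq_dec _ _ (V_le_1 a x Ha Hx)) as [HV | ->]; [| right; f_equal; ring].
  left; apply exp_increasing; lra.
Qed.

Lemma is_derive_gibbs_pos (a x : R) :
  0 < a -> 0 < x -> is_derive (gibbs a) x (- Rpower x (a - 1) * gibbs a x).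
Proof.
  intros Ha Hx; unfold gibbs.
  apply (is_derive_comp exp (fun y => - V a y)); [apply is_derive_exp |].
  apply (is_derive_opp (V a)), is_derive_V_pos; assumption.
Qed.

Section Gibbs.

Variable a : R.
Hypothesis Ha : 1 < a.

Let gibbs_cont_a (x : R) : continuous (gibbs a) x := gibbs_cont a x Ha.

Lemma prim_gibbs_sub_le (u b : R) : 0 < u -> u <= b ->
  prim (gibbs a) b - prim (gibbs a) u <= gibbs a u / Rpower u (a - 1).
Proof.
  intros Hu Hub; set (r := Rpower u (a - 1)).
  (* On [[u, b]], [gibbs' = - y^(a-1) gibbs <= - r gibbs]. *)
  assert (Hr : 0 < r) by apply Rpower_pos.
  assert (Hgr : 0 <= gibbs a b / r) by (left; apply Rdiv_lt_0_compat; [apply gibbs_pos | exact Hr]).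
  enough (prim (gibbs a) b + gibbs a b / r <= prim (gibbs a) u + gibbs a u / r) by lra.
  apply (derive_nonpos_le (fun y => prim (gibbs a) y + gibbs a y / r)
    (fun y => gibbs a y - Rpower y (a - 1) * gibbs a y / r) u b Hub).
  - intros y Hy; apply (is_derive_plus (prim (gibbs a)) (fun y => gibbs a y / r)).
    + apply is_derive_prim, gibbs_cont_a.
    + replace (- (Rpower y (a - 1) * gibbs a y / r)) with ((- Rpower y (a - 1) * gibbs a y) * / r)
        by (field; lra).
      apply (is_derive_scal_l (gibbs a) y (- Rpower y (a - 1) * gibbs a y) (/ r)).
      apply is_derive_gibbs_pos; lra.
  - intros y Hy.
    assert (r <= Rpower y (a - 1)) by (apply Rle_Rpower_l; lra).
    assert (gibbs a y * (r - Rpower y (a - 1)) <= 0) by (pose proof (gibbs_pos a y); nra).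
    replace (gibbs a y - Rpower y (a - 1) * gibbs a y / r)
      with (gibbs a y * (r - Rpower y (a - 1)) * / r) by (field; lra).
    apply Rmult_le_0_r; [assumption | left; apply Rinv_0_lt_compat, Hr].
Qed.

Lemma ex_lim_prim_gibbs : exists A : R, is_lim (prim (gibbs a)) p_infty A.
Proof.
  apply (is_lim_incr_bounded _ (prim (gibbs a) 1 + 1)).
  - apply (prim_le _ gibbs_cont_a (gibbs_pos a)).
  - intros x; destruct (Rle_lt_dec x 1) as [Hx | Hx].
    + pose proof (prim_le (gibbs a) gibbs_cont_a (gibbs_pos a) x 1 Hx); lra.
    + pose proof (prim_gibbs_sub_le 1 x Rlt_0_1 (Rlt_le _ _ Hx)).
      pose proof (gibbs_le_1 a 1 ltac:(lra)).
      rewrite Rpower_1_base, Rdiv_1_r in *; lra.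
Qed.

Variable A : R.
Hypothesis HA : is_lim (prim (gibbs a)) p_infty A.

Lemma lim_sub_prim_gibbs_le (u : R) : 0 < u ->
  A - prim (gibbs a) u <= gibbs a u / Rpower u (a - 1).
Proof.
  intros Hu.
  enough (A <= prim (gibbs a) u + gibbs a u / Rpower u (a - 1)) by lra.
  apply (is_lim_p_infty_le (prim (gibbs a)) A _ u); [| exact HA].
  intros x Hx; pose proof (prim_gibbs_sub_le u x Hu (Rlt_le _ _ Hx)); lra.
Qed.

Lemma Zc_eq : Zc a = 2 * A.
Proof.
  unfold Zc; apply (is_RInt_gen_unique (V := R_CompleteNormedModule)).
  exact (is_RInt_gen_prim_total (gibbs a) gibbs_cont_a (gibbs_even a) A HA).
Qed.

Lemma H_cdf (x : R) : H a x = cdf (gibbs a) A x.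
Proof.
  pose proof (prim_lim_pos (gibbs a) gibbs_cont_a (gibbs_pos a) A HA) as HA0.
  assert (Hscal := is_RInt_gen_scal (V := R_NormedModule) _ (/ (2 * A)) _
    (is_RInt_gen_m_infty_prim (gibbs a) gibbs_cont_a (gibbs_even a) A HA x)).
  unfold H; rewrite Zc_eq.
  transitivity (RInt_gen (fun y => scal (/ (2 * A)) (gibbs a y))
    (Rbar_locally m_infty) (at_point x)).
  - symmetry; apply (RInt_gen_ext_eq (V := R_CompleteNormedModule));
      [intros y; apply Rmult_comm | eexists; exact Hscal].
  - apply (is_RInt_gen_unique (V := R_CompleteNormedModule)).
    replace (cdf (gibbs a) A x) with (scal (/ (2 * A)) (A + prim (gibbs a) x))
      by apply Rmult_comm.
    exact Hscal.
Qed.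

Lemma lim_sub_prim_gibbs_mul_le_large (y : R) : 1 <= y ->
  (A - prim (gibbs a) y) * (abspow (a - 1) y + 1) <= 2 * gibbs a y.
Proof.
  intros Hy.
  assert (Hpow : abspow (a - 1) y = Rpower y (a - 1)).
  { unfold abspow; destruct (Req_EM_T y 0); [lra | rewrite Rabs_pos_eq; lra]. }
  assert (Hr : 1 <= Rpower y (a - 1)).
  { rewrite <- (Rpower_1_base (a - 1)) at 1; apply Rle_Rpower_l; lra. }
  pose proof (lim_sub_prim_gibbs_le y ltac:(lra)).
  pose proof (prim_le_lim (gibbs a) gibbs_cont_a (gibbs_pos a) A HA y).
  pose proof (gibbs_pos a y).
  assert (gibbs a y / Rpower y (a - 1) <= gibbs a y) by (apply Rdiv_le_self; lra).
  rewrite Hpow.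
  apply Rle_trans with (gibbs a y / Rpower y (a - 1) * (Rpower y (a - 1) + 1));
    [apply Rmult_le_compat_r; lra |].
  replace (gibbs a y / Rpower y (a - 1) * (Rpower y (a - 1) + 1))
    with (gibbs a y + gibbs a y / Rpower y (a - 1)) by (field; lra).
  lra.
Qed.

Lemma lim_sub_prim_gibbs_mul_le_small (y : R) : 0 <= y <= 1 ->
  (A - prim (gibbs a) y) * (abspow (a - 1) y + 1) <= 2 * exp 1 * A * gibbs a y.
Proof.
  intros Hy.
  pose proof (prim_lim_pos (gibbs a) gibbs_cont_a (gibbs_pos a) A HA).
  pose proof (prim_nonneg (gibbs a) gibbs_cont_a (gibbs_pos a) y (proj1 Hy)).
  pose proof (prim_le_lim (gibbs a) gibbs_cont_a (gibbs_pos a) A HA y).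
  pose proof (abspow_le_1 (a - 1) y ltac:(lra) ltac:(rewrite Rabs_pos_eq; lra)).
  pose proof (abspow_nonneg (a - 1) y).
  pose proof (gibbs_ge_exp_m1 a y ltac:(lra) ltac:(rewrite Rabs_pos_eq; lra)) as Hg.
  assert (HA2 : (A - prim (gibbs a) y) * (abspow (a - 1) y + 1) <= 2 * A)
    by (rewrite Rmult_comm; apply Rmult_le_compat; lra).
  assert (Hee : exp 1 * exp (-1) = 1) by (rewrite <- exp_plus, Rplus_opp_r; apply exp_0).
  apply Rmult_le_compat_l with (r := 2 * exp 1 * A) in Hg; [| pose proof (exp_pos 1); nra].
  replace (2 * exp 1 * A * exp (-1)) with (2 * A * (exp 1 * exp (-1))) in Hg by ring.
  rewrite Hee in Hg; lra.
Qed.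

Lemma lim_sub_prim_gibbs_mul_le (y : R) : 0 <= y ->
  (A - prim (gibbs a) y) * (abspow (a - 1) y + 1) <= (2 + 2 * exp 1 * A) * gibbs a y.
Proof.
  intros Hy.
  pose proof (prim_lim_pos (gibbs a) gibbs_cont_a (gibbs_pos a) A HA).
  assert (0 <= 2 * exp 1 * A * gibbs a y).
  { pose proof (exp_pos 1); pose proof (gibbs_pos a y).
    apply Rmult_le_pos; [apply Rmult_le_pos |]; lra. }
  pose proof (gibbs_pos a y).
  destruct (Rle_lt_dec 1 y) as [Hy1 | Hy1].
  - pose proof (lim_sub_prim_gibbs_mul_le_large y Hy1); lra.
  - pose proof (lim_sub_prim_gibbs_mul_le_small y ltac:(lra)); lra.
Qed.

Lemma is_derive_rearrangement (t : R -> R) (s : R) :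
  (forall x, G x = cdf (gibbs a) A (t x)) ->
  is_derive t s ((A - prim (gibbs a) (Rabs (t s))) / gibbs a (Rabs (t s))).
Proof.
  intros HGt.
  pose proof (prim_lim_pos (gibbs a) gibbs_cont_a (gibbs_pos a) A HA) as HA0.
  assert (Hdt : is_derive t s (laplace s / (gibbs a (t s) / (2 * A)))).
  { apply (is_derive_inverse (cdf (gibbs a) A) G t s).
    - exact HGt.
    - exact (incr_inj G G_incr).
    - apply (continuity_pt_incr_comp _ G t s HGt (cdf_incr _ gibbs_cont_a (gibbs_pos a) A HA)).
      apply continuity_pt_filterlim, (ex_derive_continuous (K := R_AbsRing) (V := R_NormedModule)).
      eexists; apply is_derive_G.
    - exact (is_derive_cdf _ gibbs_cont_a (gibbs_pos a) A HA (t s)).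
    - apply Rgt_not_eq, Rdiv_lt_0_compat; [apply gibbs_pos | lra].
    - apply is_derive_G. }
  rewrite <- Rmin_G, HGt, (Rmin_cdf _ gibbs_cont_a (gibbs_even a) (gibbs_pos a) A HA) in Hdt.
  rewrite <- (even_Rabs (gibbs a) (t s) (gibbs_even a)) in Hdt.
  pose proof (gibbs_pos a (Rabs (t s))).
  replace ((A - prim (gibbs a) (Rabs (t s))) / gibbs a (Rabs (t s))) with
    ((A - prim (gibbs a) (Rabs (t s))) / (2 * A) / (gibbs a (Rabs (t s)) / (2 * A)))
    by (field; lra).
  exact Hdt.
Qed.

End Gibbs.

Theorem lemma3p5 (alpha : R) (halpha : 1 < alpha) :
  exists C : R, 0 < C /\
    forall t : R -> R,
      (forall x, G x = H alpha (t x)) ->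
      forall s : R,
        ex_derive t s /\
        Rabs (Derive t s) <= C / (Derive (V alpha) (Rabs (t s)) + 1).
Proof.
  destruct (ex_lim_prim_gibbs alpha halpha) as [A HA].
  pose proof (fun x => gibbs_cont alpha x halpha) as Hcont.
  pose proof (prim_lim_pos (gibbs alpha) Hcont (gibbs_pos alpha) A HA) as HA0.
  exists (2 + 2 * exp 1 * A); split; [pose proof (exp_pos 1); nra |].
  intros t Ht s.
  assert (Hdt := is_derive_rearrangement alpha halpha A HA t s
    (fun x => eq_trans (Ht x) (H_cdf alpha halpha A HA (t x)))).
  split; [eexists; exact Hdt |].
  set (y := Rabs (t s)) in *.
  rewrite (is_derive_unique _ _ _ Hdt).
  rewrite (is_derive_unique _ _ _ (is_derive_V_nonneg alpha y halpha (Rabs_pos (t s)))).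
  pose proof (gibbs_pos alpha y).
  pose proof (prim_le_lim _ Hcont (gibbs_pos alpha) A HA y).
  pose proof (abspow_nonneg (alpha - 1) y).
  rewrite Rabs_pos_eq by (apply Rdiv_le_0_compat; lra).
  apply Rdiv_le_cross; [lra | lra |].
  apply lim_sub_prim_gibbs_mul_le; [exact halpha | exact HA | apply Rabs_pos].
Qed.
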